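(* Let $p\ge1$, $\phi_1,\dots,\phi_p:\mathbb Z\to\mathbb C$, $v:\mathbb Z\to\mathbb C$, $s\in\mathbb Z$, complex numbers $y_{s},y_{s-1},\dots,y_{s-p+1}$, and an integer $t>s$. Then $$\sum_{m=1}^{p}\sum_{j=1}^{p-m+1}\phi_{m+j-1}(s+j)H(t,s+j)y_{s-m+1}+\sum_{j=1}^{t-s}H(t,s+j)v_{s+j}=\det N,$$ where $N$ is the $(t-s)\times(t-s)$ matrix obtained from $\Phi_{t,s}$ by replacing its first column with $(w_1,\dots,w_{t-s})^T$, $w_i=\sum_{m=1}^{p}y_{s-m+1}\,\phi_{m+i-1}(s+i)+v_{s+i}$.
   Context: Convention: $\phi_l=0$ for $l>p$. $\Gamma_t$ is the $p\times p$ companion matrix with first row $(\phi_1(t),\dots,\phi_p(t))$, entries $(i,i-1)$ equal to $1$ for $2\le i\le p$, other entries $0$. The Green's function: for integers $u$ and $t\ge u-p+1$, $H(t,u)$ is the $(1,1)$ entry of $\Gamma_t\Gamma_{t-1}\cdots\Gamma_{u+1}$ if $t>u$; $H(u,u)=1$; $H(t,u)=0$ if $u-p+1\le t<u$. For $t>s$, $\Phi_{t,s}$ is the $(t-s)\times(t-s)$ matrix with $(i,j)$ entry $-1$ if $j=i+1$, $\phi_{i-j+1}(s+i)$ if $1\le j\le i$, $0$ if $j>i+1$. *)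

From mathcomp Require Import all_boot all_algebra.
From mathcomp Require Import all_reals.
From mathcomp Require Export complex.
Set Implicit Arguments. Unset Strict Implicit. Unset Printing Implicit Defensive.
Import GRing.Theory Num.Theory.
Local Open Scope ring_scope.

Section Defs.
Variable C : comNzRingType.

Definition phiz (p : nat) (phi : nat -> int -> C) (l : nat) (t : int) : C :=
  if (1 <= l <= p)%N then phi l t else 0.

(* companion matrix Gamma_t (p = n.+1); 0-based indices:
   row 0 is (phi_1(t),...,phi_p(t)), entries (i+1,i) are 1, others 0 *)
Definition Gamma (n : nat) (phi : nat -> int -> C) (t : int) : 'M[C]_n.+1 :=
  \matrix_(i < n.+1, j < n.+1)
    (if i == ord0 then phiz n.+1 phi j.+1 t
     else if (i == j.+1 :> nat) then 1 else 0).

(* Gprod k u = Gamma_{u+k} * ... * Gamma_{u+1}  (identity for k = 0) *)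
Fixpoint Gprod (n : nat) (phi : nat -> int -> C) (k : nat) (u : int) : 'M[C]_n.+1 :=
  match k with
  | 0 => 1%:M
  | k'.+1 => Gamma n phi (u + k'.+1%:Z) *m Gprod n phi k' u
  end.

(* Green's function H(t,u): (1,1) entry of Gamma_t...Gamma_{u+1} if t > u,
   1 if t = u, 0 if t < u *)
Definition Hgreen (n : nat) (phi : nat -> int -> C) (t u : int) : C :=
  if u <= t then Gprod n phi `|t - u|%N u ord0 ord0 else 0.

(* Phi_{t,s}, of size (t-s) x (t-s); 0-based indices i', j' correspond to
   1-based i = i'+1, j = j'+1:  -1 if j = i+1, phi_{i-j+1}(s+i) if j <= i, 0 else *)
Definition PhiMx (p : nat) (phi : nat -> int -> C) (t s : int)
  : 'M[C]_(`|t - s|%N) :=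
  \matrix_(i, j)
    (if (j == i.+1 :> nat) then -1
     else if (j <= i)%N then phiz p phi (i - j).+1 (s + i.+1%:Z)
     else 0).

End Defs.

(* Splitting off the
   rightmost factor Gamma_{u+1} gives the first-step recursion
   H(u+k+1, u) = sum_i phi_{i+1}(u+i+1) H(u+k+1, u+i+1).  The matrix N is lower
   Hessenberg with -1 on the superdiagonal, so expanding its determinant along
   the first row yields exactly this recursion: det N = sum_j w_j H(t, s+j).
   Substituting the definition of w_j and exchanging the two sums, the terms
   phi_{m+j-1} vanishing for j > p-m+1 and H(t, s+j) vanishing for j > t-s,
   gives the left-hand side. *)
From mathcomp Require Import all_boot all_algebra.
From mathcomp Require Import all_reals.
From mathcomp Require Import complex.
From mathcomp Require Import zify.
Set Implicit Arguments. Unset Strict Implicit. Unset Printing Implicit Defensive.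
Import GRing.Theory Num.Theory.
Local Open Scope ring_scope.

Lemma big_nat_widen0 (V : nmodType) (l a b : nat) (F : nat -> V) :
  (a <= b)%N -> (forall j, (a <= j)%N -> F j = 0) ->
  \sum_(l <= j < a) F j = \sum_(l <= j < b) F j.
Proof.
move=> le_ab F0; rewrite (big_nat_widen _ _ _ _ _ le_ab) big_mkcond /=.
by apply: eq_bigr => j _; case: ltnP => // /F0 ->.
Qed.

Section GreenRecursion.
Variables (C : comNzRingType) (n : nat) (phi : nat -> int -> C).
Local Notation p := n.+1.
Local Notation phiz := (phiz p phi).

Definition green k u : C := Gprod n phi k u ord0 ord0.

Lemma Hgreen_green k u : Hgreen n phi (u + k%:Z) u = green k u.
Proof. by rewrite /Hgreen ifT; [congr (Gprod _ _ _ _ _ _); lia | lia]. Qed.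

Lemma GprodSr k u : Gprod n phi k.+1 u = Gprod n phi k (u + 1) *m Gamma n phi (u + 1).
Proof.
elim: k u => [|k IHk] u; first by rewrite /= mulmx1 mul1mx.
rewrite -[LHS]/(Gamma n phi (u + k.+2%:Z) *m Gprod n phi k.+1 u) IHk mulmxA.
rewrite -[Gprod n phi k.+1 _]/(Gamma n phi (u + 1 + k.+1%:Z) *m Gprod n phi k (u + 1)).
by congr (Gamma n phi _ *m _ *m _); lia.
Qed.

(* Indexed by [nat] and extended by 0 beyond column p, so that the column shift
   in [Gprod_row0S] needs no bound check. *)
Definition Gprod_row0 k u (c : nat) : C :=
  if (c < p)%N then Gprod n phi k u ord0 (inord c) else 0.

Lemma Gprod_row0_green k u : Gprod_row0 k u 0 = green k u.
Proof.
by rewrite /Gprod_row0 /green; congr (Gprod _ _ _ _ _ _); apply: val_inj; rewrite /= inordK.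
Qed.

Lemma Gprod0_row0 u c : Gprod_row0 0 u c = (c == 0%N)%:R.
Proof.
rewrite /Gprod_row0 /= mxE; case: ltnP => [c_lt|]; last by case: c.
by rewrite -val_eqE /= inordK // eq_sym.
Qed.

Lemma Gprod_row0S k u c :
  Gprod_row0 k.+1 u c = phiz c.+1 (u + 1) * green k (u + 1) + Gprod_row0 k (u + 1) c.+1.
Proof.
rewrite {1}/Gprod_row0; case: (ltnP c p) => [c_lt|c_ge]; last first.
  by rewrite /Gprod_row0 /phiz !ifF ?mul0r ?addr0 //; lia.
rewrite GprodSr mxE big_ord_recl !mxE /= inordK // mulrC; congr (_ + _).
transitivity (\sum_(i < n | (i : nat) == c) Gprod_row0 k (u + 1) i.+1).
  rewrite [RHS]big_mkcond; apply: eq_bigr => i _; rewrite mxE /= inordK // eqSS.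
  case: eqP => _; rewrite ?mulr1 ?mulr0 // /Gprod_row0 ltnS ltn_ord.
  by congr (Gprod _ _ _ _ _ _); apply: val_inj; rewrite /= inordK // ltnS.
rewrite (big_ord1_eq _ (fun r => Gprod_row0 k (u + 1) r.+1)).
by case: ltnP => // c_ge; rewrite /Gprod_row0 ifF //; lia.
Qed.

Lemma Gprod_row0E k u c : Gprod_row0 k u c =
  \sum_(i < k) phiz (c + i.+1) (u + i.+1%:Z) * green (k - i.+1) (u + i.+1%:Z)
  + ((c == 0%N) && (k == 0%N))%:R.
Proof.
elim: k u c => [|k IHk] u c; first by rewrite Gprod0_row0 big_ord0 add0r andbT.
rewrite Gprod_row0S IHk big_ord_recl /= andbF !addr0 addn1 subn1; congr (_ + _).
by apply: eq_bigr => i _; rewrite /bump /=; congr (phiz _ _ * green _ _); lia.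
Qed.

Lemma green_rec k u : green k.+1 u =
  \sum_(i < k.+1) phiz i.+1 (u + i.+1%:Z) * green (k - i) (u + i.+1%:Z).
Proof. by rewrite -Gprod_row0_green Gprod_row0E /= addr0. Qed.

(* [PhiMx] with base point [u] and size [m] left free. *)
Definition hess_entry u (i j : nat) : C :=
  if j == i.+1 then -1 else if (j <= i)%N then phiz (i - j).+1 (u + i.+1%:Z) else 0.

Definition hessmx m u (w : nat -> C) : 'M[C]_m :=
  \matrix_(i, j) if (j : nat) == 0%N then w i else hess_entry u i j.

Lemma hess_entrySS u i j : hess_entry u i.+1 j.+1 = hess_entry (u + 1) i j.
Proof.
rewrite /hess_entry eqSS ltnS subSS; case: eqP => // _; case: ifP => // _.
by congr (phiz _ _); lia.
Qed.

Lemma det_hessmx m u w : \det (hessmx m.+1 u w) =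
  \sum_(i < m.+1) w i * green (m - i) (u + i.+1%:Z).
Proof.
elim: m u w => [|m IHm] u w; first by rewrite det_mx11 big_ord1 !mxE /green /= mxE mulr1.
have minor00 : row' ord0 (col' ord0 (hessmx m.+2 u w)) =
    hessmx m.+1 (u + 1) (fun i => phiz i.+1 (u + 1 + i.+1%:Z)).
  apply/matrixP => i j; rewrite !mxE /= hess_entrySS.
  by case: eqP => // ->; rewrite /hess_entry subn0.
have minor01 : row' ord0 (col' (lift ord0 ord0) (hessmx m.+2 u w)) =
    hessmx m.+1 (u + 1) (fun i => w i.+1).
  by apply/matrixP => i [[|j] lt_j]; rewrite !mxE /= ?hess_entrySS.
rewrite (expand_det_row _ ord0) big_ord_recl big_ord_recl big1 ?addr0; last first.
  by move=> j _; rewrite !mxE /= /hess_entry mul0r.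
rewrite /cofactor minor00 minor01 !IHm !mxE /= /hess_entry /=.
rewrite -green_rec expr0 expr1 !mulN1r opprK mul1r.
rewrite [RHS]big_ord_recl /= subn0; congr (_ + _).
by apply: eq_bigr => i _; rewrite /bump /=; congr (_ * green _ _); lia.
Qed.

End GreenRecursion.

Theorem proposition6 (R : realType) (n : nat)
  (phi : nat -> int -> R[i]) (v : int -> R[i]) (s : int) (y : int -> R[i])
  (t : int) (hts : s < t) :
  let p := n.+1 in
  let w := fun i : nat =>
    \sum_(1 <= m < p.+1) y (s - m%:Z + 1) * phiz p phi (m + i - 1) (s + i%:Z)
    + v (s + i%:Z) in
  \sum_(1 <= m < p.+1) \sum_(1 <= j < (p - m + 1).+1)
      phiz p phi (m + j - 1) (s + j%:Z) * Hgreen n phi t (s + j%:Z)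
        * y (s - m%:Z + 1)
  + \sum_(1 <= j < (`|t - s|%N).+1) Hgreen n phi t (s + j%:Z) * v (s + j%:Z)
  = \det (\matrix_(i, j) (if (j : nat) == 0%N then w i.+1
                          else PhiMx p phi t s i j)).
Proof.
move=> p w.
rewrite (_ : \matrix_(i, j) _ = hessmx n phi `|t - s| s (fun i => w i.+1)); last first.
  by apply/matrixP => i j; rewrite !mxE; case: eqP => // _; rewrite /PhiMx mxE.
have [k dist_ts] : exists k, `|t - s|%N = k.+1 by exists `|t - s|.-1; lia.
rewrite dist_ts det_hessmx.
transitivity (\sum_(1 <= j < k.+2) w j * Hgreen n phi t (s + j%:Z)); last first.
  rewrite big_add1 /= big_mkord; apply: eq_bigr => i _.
  by rewrite (_ : t = s + i.+1%:Z + (k - i)%:Z) ?Hgreen_green //; move: (ltn_ord i); lia.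
under [RHS]eq_bigr do rewrite mulrDl mulr_suml.
rewrite big_split /= exchange_big_nat; congr (_ + _); last first.
  by apply: eq_bigr => j _; rewrite mulrC.
apply: eq_big_nat => m /andP [m_ge1 m_le].
rewrite (@big_nat_widen0 _ _ _ (p + k).+2); last 2 first.
- lia.
- by move=> j j_gt; rewrite /phiz ifF ?mul0r //; lia.
rewrite [RHS](@big_nat_widen0 _ _ _ (p + k).+2); last 2 first.
- lia.
- by move=> j j_gt; rewrite /Hgreen ifF ?mulr0 //; lia.
by apply: eq_bigr => j _; rewrite mulrC mulrA.
Qed.
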